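(* Let $(p_\lambda(\mathbf y))_{\lambda\in\mathcal P}$ be a full sequence of symmetric functions of binomial type associated with the quasi-genus $G$. Then for all partitions $\lambda$ and $\mu$, with $r=\ell(\mu)$, $$\mathbf D_\mu\,p_\lambda(\mathbf y)=\sum\frac{\lambda!}{\big(\lambda-\alpha^{(1)}-\cdots-\alpha^{(r)}\big)!\,\alpha^{(1)}!\cdots\alpha^{(r)}!}\,G_{\alpha^{(1)}}\cdots G_{\alpha^{(r)}}\;p_{\lambda-\alpha^{(1)}-\cdots-\alpha^{(r)}}(\mathbf y).$$ The sum runs over all tuples $(\alpha^{(1)},\dots,\alpha^{(r)})$ of vectors in $\mathbb Z_{\ge0}^{\ell(\lambda)}$ such that $|\alpha^{(i)}|=\mu_i$ for each $i$ and $\alpha^{(1)}+\cdots+\alpha^{(r)}\le\lambda$ componentwise.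
   Context: **Derivatives.** $\mathbf D_n$ is the linear operator on symmetric functions with $\mathbf D_nm_\nu=n!\,m_{\nu\setminus n}$ if $n$ is a part of $\nu$ (one part removed), and $0$ otherwise. For a partition $\mu$, $\mathbf D_\mu=\prod_{i=1}^{\ell(\mu)}\mathbf D_{\mu_i}/\mu_i!$. **Full sequence.** Partitions of $n$ are ordered by Macdonald's reverse lexicographic order. A full sequence is a family $(p_\lambda)_{\lambda\in\mathcal P}$ of homogeneous symmetric functions in $\mathbf y=(y_1,y_2,\dots)$ such that the largest partition with nonzero coefficient in the monomial expansion of $p_\lambda$ is $\lambda$. **Vector conventions.** For a finitely supported vector $\alpha$ of nonnegative integers, $p_\alpha$ and $G_\alpha$ mean the value at the sorted partition. We write $\alpha!=\prod\alpha_i!$, $|\alpha|=\sum\alpha_i$, and $\binom{\lambda}{\alpha}=\lambda!/(\alpha!(\lambda-\alpha)!)$. **Binomial type.** $(p_\lambda)$ is of binomial type if $p_\lambda(\mathbf y\cup\mathbf z)=\sum_{0\le\alpha\le\lambda}\binom{\lambda}{\alpha}p_\alpha(\mathbf y)p_{\lambda-\alpha}(\mathbf z)$ for disjoint variable sets. **Quasi-genus.** A quasi-genus is an assignment $\lambda\mapsto G_\lambda\in\mathbb C$ with $G_\emptyset=1$. **Association.** $(p_\lambda)$ is associated with $G$ if $$p_\lambda(\mathbf y)=\sum\frac{\lambda!}{\prod_j\alpha^{(j)}!}\prod_{j\ge1}G_{\alpha^{(j)}}y_j^{|\alpha^{(j)}|},$$ summed over families $(\alpha^{(j)})_{j\ge1}$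 of vectors in $\mathbb Z_{\ge0}^{\ell(\lambda)}$, almost all zero, with $\sum_j\alpha^{(j)}=\lambda$. *)

From HB Require Import structures.
From mathcomp Require Import all_boot all_order all_algebra.
Set Implicit Arguments. Unset Strict Implicit. Unset Printing Implicit Defensive.
Import Order.TTheory GRing.Theory Num.Theory.
Local Open Scope ring_scope.

Definition is_part (s : seq nat) : bool :=
  sorted geq s && all (fun x => 0 < x)%N s.

Definition sortpart (s : seq nat) : seq nat := sort geq [seq x <- s | (0 < x)%N].

Fixpoint revlex_le (s t : seq nat) : bool :=
  match s, t with
  | [::], _ => true
  | _ :: _, [::] => false
  | x :: s', y :: t' => (x < y)%N || ((x == y) && revlex_le s' t')
  end.

(** A symmetric function f in y = (y_1, y_2, ...) is represented by its
    coefficients in the monomial basis: f = sum_nu f(nu) m_nu, where nu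
    ranges over partitions (values of f at non-partitions are irrelevant).
    Equivalently f(nu) is the coefficient of any monomial y^a with
    sortpart a = nu. *)

Section SymFun.
Variable C : numClosedFieldType.

Definition homogeneous (f : seq nat -> C) : Prop :=
  exists d, forall nu, is_part nu -> f nu != 0 -> sumn nu = d.

Definition full_sequence (p : seq nat -> seq nat -> C) : Prop :=
  forall la, is_part la ->
    [/\ homogeneous (p la), p la la != 0 &
        forall nu, is_part nu -> p la nu != 0 -> revlex_le nu la].

Definition quasi_genus (G : seq nat -> C) : Prop := G [::] = 1.

(** Vectors in Z_{>=0}^{l(la)} with entries at most |la| (a finite box that
    contains every vector occurring in the sums below). *)
Definition box (la : seq nat) := {ffun 'I_(size la) -> 'I_(sumn la).+1}.
Definition bv (la : seq nat) (a : box la) : 'I_(size la) -> nat := fun i => a i.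
Definition lav (la : seq nat) : 'I_(size la) -> nat := fun i => nth 0%N la i.
Arguments lav la i : clear implicits.
Definition vseq (l : nat) (v : 'I_l -> nat) : seq nat := [seq v i | i <- enum 'I_l].
Definition vfact (l : nat) (v : 'I_l -> nat) : nat := (\prod_(i < l) (v i)`!)%N.
Definition vsum (l : nat) (v : 'I_l -> nat) : nat := (\sum_(i < l) v i)%N.
Definition vsub (l : nat) (v w : 'I_l -> nat) : 'I_l -> nat := fun i => (v i - w i)%N.

(** Binomial type, coefficientwise: the coefficient of y^a z^b in
    p_la(y u z) is p_la(sortpart (a ++ b)); that of p_al(y) p_{la-al}(z) is
    p_al(sortpart a) * p_{la-al}(sortpart b). *)
Definition binomial_type (p : seq nat -> seq nat -> C) : Prop :=
  forall la, is_part la -> forall a b : seq nat,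
    p la (sortpart (a ++ b)) =
    \sum_(al : box la | [forall i, (bv al i <= lav la i)%N])
      (vfact (lav la))%:R / ((vfact (bv al))%:R * (vfact (vsub (lav la) (bv al)))%:R)
      * p (sortpart (vseq (bv al))) (sortpart a)
      * p (sortpart (vseq (vsub (lav la) (bv al)))) (sortpart b).

(** Association with G, coefficientwise: the coefficient of y^a
    (a = (a_1,...,a_k) an exponent sequence, y_j^0 for j > k) in the defining
    series is the sum over families (al^(1),...,al^(k)) (al^(j) = 0 for j > k
    is forced) with |al^(j)| = a_j and sum_j al^(j) = la. *)
Definition associated (p : seq nat -> seq nat -> C) (G : seq nat -> C) : Prop :=
  forall la, is_part la -> forall a : seq nat,
    p la (sortpart a) =
    \sum_(F : {ffun 'I_(size a) -> box la} |
            [forall j, vsum (bv (F j)) == nth 0%N a j] &&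
            [forall k, (\sum_(j < size a) bv (F j) k)%N == lav la k])
      (vfact (lav la))%:R / (\prod_(j < size a) (vfact (bv (F j)))%:R)
      * \prod_(j < size a) G (sortpart (vseq (bv (F j)))).

(** Derivative D_n in coefficients: D_n m_nu = n! m_{nu \ n} if n is a part
    of nu, else 0; hence (D_n f)(ka) = n! f(ka u {n}) for n > 0, and D_0 = 0. *)
Definition Dn (n : nat) (f : seq nat -> C) : seq nat -> C :=
  fun ka => if n == 0%N then 0 else (n`!)%:R * f (sortpart (n :: ka)).

Definition Dmu (mu : seq nat) (f : seq nat -> C) : seq nat -> C :=
  foldr (fun n g => fun ka => ((n`!)%:R)^-1 * Dn n g ka) f mu.

End SymFun.
Arguments lav la i : clear implicits.

From mathcomp Require Import all_boot all_algebra.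
From mathcomp Require Import ring.
Set Implicit Arguments. Unset Strict Implicit. Unset Printing Implicit Defensive.
Import GRing.Theory Num.Theory.

(* Since D_n acts on monomial coefficients by inserting a part n, the
   coefficient of m_ka in D_mu p_la is the coefficient of m_(mu u ka) in p_la.
   Expand it by the association formula for the exponent sequence mu ++ ka: a
   family of vectors splits into its first l(mu) members A, with
   |A_i| = mu_i, and the remaining ones B, which sum to la - (sum_i A_i).  For
   fixed A the sum over B is again an association formula, for the vector
   v = la - (sum_i A_i), and equals p_v(ka) / v!.  Reading that formula at a
   vector rather than at its sorted partition amounts to transporting
   families along an injection of the sorted support of v into the
   coordinates of la. *)

Lemma geq_total : total geq.
Proof. by move=> x y; rewrite /= orbC leq_total. Qed.

Lemma geq_trans : transitive geq.
Proof. by move=> y x z /= yx zy; apply: leq_trans zy yx. Qed.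

Lemma geq_anti : antisymmetric geq.
Proof. by move=> x y /andP[yx xy]; apply/anti_leq/andP. Qed.

Lemma is_part_sortpart (s : seq nat) : is_part (sortpart s).
Proof.
rewrite /is_part /sortpart sort_sorted ?all_sort; last exact: geq_total.
by apply/allP => x; rewrite mem_filter => /andP[].
Qed.

Lemma sortpart_id (s : seq nat) : is_part s -> sortpart s = s.
Proof.
case/andP=> s_sorted s_pos.
by rewrite /sortpart (all_filterP s_pos) sorted_sort //; apply: geq_trans.
Qed.

Lemma eq_sortpart (s t : seq nat) :
  perm_eq [seq x <- s | (0 < x)%N] [seq x <- t | (0 < x)%N] -> sortpart s = sortpart t.
Proof. exact/perm_sortP/geq_anti/geq_trans/geq_total. Qed.

Lemma sortpart_perm (s t : seq nat) : perm_eq s t -> sortpart s = sortpart t.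
Proof. by move=> st; apply/eq_sortpart/perm_filter. Qed.

Lemma sortpart_cons (n : nat) (s : seq nat) :
  sortpart (n :: sortpart s) = sortpart (n :: s).
Proof.
apply: eq_sortpart; have /andP[_ /all_filterP /= ->] := is_part_sortpart s.
by case: ifP; rewrite ?perm_cons perm_sort.
Qed.

Lemma Dmu_sortpart (C : numClosedFieldType) (f : seq nat -> C) (mu s : seq nat) :
  all (leq 1) mu -> Dmu mu f (sortpart s) = f (sortpart (mu ++ s)).
Proof.
elim: mu s => [|n mu IH] s //= /andP[n_gt0 mu_gt0].
rewrite /Dn eqn0Ngt n_gt0 mulrA mulVf ?mul1r ?pnatr_eq0 -?lt0n ?fact_gt0 //.
rewrite sortpart_cons IH //; congr f; apply: sortpart_perm.
by rewrite -cat1s -[n :: _]cat1s perm_catCA.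
Qed.

Lemma count_vseq (l : nat) (w : 'I_l -> nat) (P : pred nat) :
  count P (vseq w) = (\sum_(i < l) P (w i))%N.
Proof. by rewrite /vseq count_map -sum1_count big_mkcond big_enum. Qed.

Lemma big_ord_supp_inj (R : Type) (idx : R) (op : Monoid.com_law idx) (m l : nat)
    (s : 'I_m -> 'I_l) (w : 'I_l -> nat) (g : nat -> R) :
  injective s -> g 0%N = idx -> (forall k, k \notin codom s -> w k = 0%N) ->
  \big[op/idx]_(k < l) g (w k) = \big[op/idx]_(i < m) g (w (s i)).
Proof.
move=> s_inj g0 w0; rewrite (bigID (mem (codom s))) /= [X in op _ X]big1 => [|k /w0 ->//].
have codom_imset : codom s =i [set s i | i in setT].
  by move=> k; apply/codomP/imsetP => [[i ->]|[i _ ->]]; exists i.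
rewrite Monoid.mulm1 (eq_bigl _ _ codom_imset) big_imset; last exact: in2W.
by apply: eq_bigl => i; rewrite inE.
Qed.

Lemma leq_vsum (l : nat) (w : 'I_l -> nat) (i : 'I_l) : (w i <= vsum w)%N.
Proof. by rewrite /vsum (bigD1 i) //= leq_addr. Qed.

Lemma vfact_gt0 (l : nat) (w : 'I_l -> nat) : (0 < vfact w)%N.
Proof. by apply: prodn_gt0 => i; apply: fact_gt0. Qed.

Lemma vsum_lav (s : seq nat) : vsum (lav s) = sumn s.
Proof. by rewrite /vsum sumnE (big_nth 0%N) big_mkord. Qed.

Lemma sortpart_vseq (l : nat) (v : 'I_l -> nat) :
  sortpart (vseq v) = map v (sort (relpre v geq) [seq k <- enum 'I_l | (0 < v k)%N]).
Proof. by rewrite /sortpart /vseq filter_map sort_map. Qed.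

Lemma support_embedding (l : nat) (v : 'I_l -> nat) :
  exists s : 'I_(size (sortpart (vseq v))) -> 'I_l,
  [/\ injective s, forall i, v (s i) = nth 0%N (sortpart (vseq v)) i &
      forall k, k \notin codom s -> v k = 0%N].
Proof.
have := sortpart_vseq v; set idx := sort _ _ => nu_def.
have size_idx : size idx == size (sortpart (vseq v)) by rewrite nu_def size_map.
exists (tnth (Tuple size_idx)); split.
- by apply/tuple_uniqP; rewrite /= sort_uniq filter_uniq // enum_uniq.
- move=> i; have i_lt : (i < size idx)%N by rewrite (eqP size_idx).
  by rewrite (tnth_nth (tnth (Tuple size_idx) i)) -(nth_map _ 0%N) // -nu_def.
- move=> k; apply: contraNeq => vk_neq0; apply/codomP.
  have : k \in Tuple size_idx by rewrite /= mem_sort mem_filter lt0n vk_neq0 mem_enum.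
  by case/tnthP=> i ->; exists i.
Qed.

Section ZeroExtension.
Variables (m l : nat) (s : 'I_m -> 'I_l).
Hypothesis s_inj : injective s.

Definition zext (w : 'I_m -> nat) (k : 'I_l) : nat :=
  if [pick i | s i == k] is Some i then w i else 0%N.

Lemma zext_s (w : 'I_m -> nat) (i : 'I_m) : zext w (s i) = w i.
Proof. by rewrite /zext; case: pickP => [i' /eqP/s_inj -> //|/(_ i)]; rewrite eqxx. Qed.

Lemma zext_out (w : 'I_m -> nat) (k : 'I_l) : k \notin codom s -> zext w k = 0%N.
Proof.
by rewrite /zext; case: pickP => [i /eqP <-|//]; rewrite codom_f.
Qed.

Lemma big_zext (R : Type) (idx : R) (op : Monoid.com_law idx) (g : nat -> R)
    (w : 'I_m -> nat) (w' : 'I_l -> nat) :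
  g 0%N = idx -> w' =1 zext w ->
  \big[op/idx]_(k < l) g (w' k) = \big[op/idx]_(i < m) g (w i).
Proof.
move=> g0 w'E; rewrite (big_ord_supp_inj _ s_inj) // => [|k k_out].
  by apply: eq_bigr => i _; rewrite w'E zext_s.
by rewrite w'E zext_out.
Qed.

Lemma vsum_zext (w : 'I_m -> nat) (w' : 'I_l -> nat) : w' =1 zext w -> vsum w' = vsum w.
Proof. exact: (big_zext _ (g := id)). Qed.

Lemma vfact_zext (w : 'I_m -> nat) (w' : 'I_l -> nat) : w' =1 zext w -> vfact w' = vfact w.
Proof. exact: (big_zext _ (g := factorial)). Qed.

Lemma sortpart_vseq_zext (w : 'I_m -> nat) (w' : 'I_l -> nat) :
  w' =1 zext w -> sortpart (vseq w') = sortpart (vseq w).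
Proof.
move=> w'E; apply/eq_sortpart/permP => P; rewrite !count_filter !count_vseq.
by apply: (big_zext _ (g := fun x => nat_of_bool ((P x) && (0 < x)%N))); rewrite ?andbF.
Qed.

Lemma forall_eq_zext (w u : 'I_m -> nat) :
  [forall k, zext w k == zext u k] = [forall i, w i == u i].
Proof.
apply/idP/idP => /forallP wu; apply/forallP.
  by move=> i; move: (wu (s i)); rewrite !zext_s.
by move=> k; rewrite /zext; case: pickP.
Qed.

End ZeroExtension.

Local Open Scope ring_scope.

Section Families.
Variables (C : numClosedFieldType) (la : seq nat) (n : nat).
Implicit Types F : {ffun 'I_n -> box la}.

Definition colsum F (k : 'I_(size la)) : nat := (\sum_(j < n) bv (F j) k)%N.

Definition fam_rowsums F (a : seq nat) : bool := [forall j, vsum (bv (F j)) == nth 0%N a j].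

Definition fam_fact F : C := \prod_(j < n) (vfact (bv (F j)))%:R.

Definition fam_weight (G : seq nat -> C) F : C := \prod_(j < n) G (sortpart (vseq (bv (F j)))).

Lemma fam_fact_neq0 F : fam_fact F != 0.
Proof. by apply/prodf_neq0 => j _; rewrite pnatr_eq0 -lt0n vfact_gt0. Qed.

End Families.

Lemma associatedE (C : numClosedFieldType) (p : seq nat -> seq nat -> C) (G : seq nat -> C)
    (pG : associated p G) (la a : seq nat) :
  is_part la ->
  p la (sortpart a) =
  \sum_(F : {ffun 'I_(size a) -> box la} |
          fam_rowsums F a && [forall k, colsum F k == lav la k])
    (vfact (lav la))%:R / fam_fact C F * fam_weight G F.
Proof. by move=> la_part; rewrite pG. Qed.

Section AssociatedAtVector.
Variables (C : numClosedFieldType) (p : seq nat -> seq nat -> C) (G : seq nat -> C).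
Hypothesis pG : associated p G.
Variables (la : seq nat) (v : 'I_(size la) -> nat) (a : seq nat).
Hypothesis v_le : (vsum v <= sumn la)%N.
Let nu := sortpart (vseq v).
Variable s : 'I_(size nu) -> 'I_(size la).
Hypotheses (s_inj : injective s) (v_s : forall i, v (s i) = nth 0%N nu i).
Hypothesis v_out : forall k, k \notin codom s -> v k = 0%N.

Let v_zext : v =1 zext s (lav nu).
Proof.
move=> k; have [/codomP[i ->]|k_out] := boolP (k \in codom s).
  by rewrite zext_s // v_s.
by rewrite zext_out // v_out.
Qed.

Let sumn_nu_le : (sumn nu <= sumn la)%N.
Proof. by rewrite -vsum_lav -(vsum_zext s_inj v_zext). Qed.

Definition lift_family (F : {ffun 'I_(size a) -> box nu}) : {ffun 'I_(size a) -> box la} :=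
  [ffun j => [ffun k => inord (zext s (bv (F j)) k)]].

Definition restrict_family (F : {ffun 'I_(size a) -> box la}) : {ffun 'I_(size a) -> box nu} :=
  [ffun j => [ffun i => inord (bv (F j) (s i))]].

Lemma bv_lift_family (F : {ffun 'I_(size a) -> box nu}) j :
  bv (lift_family F j) =1 zext s (bv (F j)).
Proof.
move=> k; rewrite /bv !ffunE inordK // ltnS /zext; case: pickP => // i _.
by rewrite -ltnS (leq_trans (ltn_ord (F j i))) // ltnS sumn_nu_le.
Qed.

Lemma restrict_familyK (F : {ffun 'I_(size a) -> box nu}) :
  restrict_family (lift_family F) = F.
Proof.
apply/ffunP => j; apply/ffunP => i.
have -> : restrict_family (lift_family F) j i = inord (bv (lift_family F j) (s i)) by rewrite !ffunE.
by rewrite bv_lift_family zext_s // inord_val.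
Qed.

Lemma lift_familyK (F : {ffun 'I_(size a) -> box la}) :
  [forall k, colsum F k == v k] -> lift_family (restrict_family F) = F.
Proof.
move=> /forallP F_cols; have F_le j k : (bv (F j) k <= v k)%N.
  by rewrite -(eqP (F_cols k)); apply: (leq_vsum (fun j => bv (F j) k)).
apply/ffunP => j; apply/ffunP => k; apply/val_inj.
rewrite -[val _]/(bv (lift_family _ j) k) bv_lift_family.
have [/codomP[i ->]|k_out] := boolP (k \in codom s).
  rewrite zext_s // /bv /restrict_family !ffunE inordK // ltnS.
  by rewrite (leq_trans (F_le j (s i))) // v_s -vsum_lav (leq_vsum (lav nu)).
by apply/esym/eqP; rewrite zext_out // -leqn0 -(v_out k_out) F_le.
Qed.

Lemma colsum_lift_family (F : {ffun 'I_(size a) -> box nu}) k :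
  colsum (lift_family F) k = zext s (colsum F) k.
Proof.
rewrite /colsum; under eq_bigr do rewrite bv_lift_family.
by rewrite /zext; case: pickP => // _; rewrite big1.
Qed.

Lemma associated_at_vector :
  p nu (sortpart a) =
  \sum_(F : {ffun 'I_(size a) -> box la} | fam_rowsums F a && [forall k, colsum F k == v k])
     (vfact v)%:R / fam_fact C F * fam_weight G F.
Proof.
rewrite (associatedE pG) ?is_part_sortpart // (reindex_onto lift_family restrict_family) /=; last first.
  by move=> F /andP[_]; apply: lift_familyK.
apply: eq_big => [F|F _].
  rewrite restrict_familyK eqxx andbT; congr andb.
    by apply: eq_forallb => j; rewrite (vsum_zext s_inj (bv_lift_family F j)).
  rewrite -(forall_eq_zext s_inj); apply: eq_forallb => k.
  by rewrite colsum_lift_family v_zext.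
rewrite (vfact_zext s_inj v_zext); congr (_ / _ * _); apply: eq_bigr => j _.
  by rewrite (vfact_zext s_inj (bv_lift_family F j)).
by rewrite (sortpart_vseq_zext s_inj (bv_lift_family F j)).
Qed.

End AssociatedAtVector.

Section FfunCat.
Variables (T : Type) (m n : nat).

Definition ffun_cat (A : {ffun 'I_m -> T}) (B : {ffun 'I_n -> T}) : {ffun 'I_(m + n) -> T} :=
  [ffun j => match split j with inl i => A i | inr i => B i end].

Lemma ffun_cat_lshift A B (i : 'I_m) : ffun_cat A B (lshift n i) = A i.
Proof. by rewrite ffunE -[lshift n i]/(unsplit (inl _ i)) unsplitK. Qed.

Lemma ffun_cat_rshift A B (i : 'I_n) : ffun_cat A B (rshift m i) = B i.
Proof. by rewrite ffunE -[rshift m i]/(unsplit (inr _ i)) unsplitK. Qed.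

Lemma big_ord_ffun_cat (R : Type) (idx : R) (op : Monoid.law idx) (f : T -> R) A B :
  \big[op/idx]_(j < m + n) f (ffun_cat A B j) =
  op (\big[op/idx]_(i < m) f (A i)) (\big[op/idx]_(i < n) f (B i)).
Proof.
by rewrite big_split_ord; congr (op _ _); apply: eq_bigr => i _;
  rewrite ?ffun_cat_lshift ?ffun_cat_rshift.
Qed.

End FfunCat.

Lemma big_ffun_cat (T : finType) (R : Type) (idx : R) (op : Monoid.com_law idx) (m n : nat)
    (Phi : {ffun 'I_(m + n) -> T} -> R) :
  \big[op/idx]_F Phi F =
  \big[op/idx]_(A : {ffun 'I_m -> T}) \big[op/idx]_(B : {ffun 'I_n -> T}) Phi (ffun_cat A B).
Proof.
rewrite pair_big /=; apply: (reindex (fun AB => ffun_cat AB.1 AB.2)).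
exists (fun F : {ffun 'I_(m + n) -> T} => ([ffun i => F (lshift n i)], [ffun i => F (rshift m i)])).
  move=> [A B] _ /=.
  by congr pair; apply/ffunP => i; rewrite ffunE ?ffun_cat_lshift ?ffun_cat_rshift.
move=> F _; apply/ffunP => j; rewrite -(splitK j); case: (split j) => i /=.
  by rewrite ffun_cat_lshift ffunE.
by rewrite ffun_cat_rshift ffunE.
Qed.

Lemma forall_split_ord (m n : nat) (P : 'I_(m + n) -> bool) :
  [forall j, P j] = [forall i, P (lshift n i)] && [forall i, P (rshift m i)].
Proof.
apply/idP/andP => [/forallP P_all|[/forallP P_l /forallP P_r]].
  by split; apply/forallP => i; apply: P_all.
by apply/forallP => j; rewrite -(splitK j); case: (split j) => i /=.
Qed.

Section FamilyCat.
Variables (C : numClosedFieldType) (la : seq nat) (m n : nat).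
Variables (A : {ffun 'I_m -> box la}) (B : {ffun 'I_n -> box la}).

Lemma colsum_cat k : colsum (ffun_cat A B) k = (colsum A k + colsum B k)%N.
Proof. exact: (big_ord_ffun_cat _ (fun x : box la => bv x k)). Qed.

Lemma fam_fact_cat : fam_fact C (ffun_cat A B) = fam_fact C A * fam_fact C B.
Proof. exact: (big_ord_ffun_cat _ (fun x : box la => (vfact (bv x))%:R)). Qed.

Lemma fam_weight_cat (G : seq nat -> C) :
  fam_weight G (ffun_cat A B) = fam_weight G A * fam_weight G B.
Proof. exact: (big_ord_ffun_cat _ (fun x : box la => G (sortpart (vseq (bv x))))). Qed.

End FamilyCat.

Lemma fam_rowsums_cat (la mu ka : seq nat)
    (A : {ffun 'I_(size mu) -> box la}) (B : {ffun 'I_(size ka) -> box la}) :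
  fam_rowsums (ffun_cat A B) (mu ++ ka) = fam_rowsums A mu && fam_rowsums B ka.
Proof.
rewrite /fam_rowsums forall_split_ord; congr andb; apply: eq_forallb => i.
  by rewrite ffun_cat_lshift nth_cat /= ltn_ord.
by rewrite ffun_cat_rshift nth_cat /= ltnNge leq_addr addKn.
Qed.

Section AssociatedCat.
Variables (C : numClosedFieldType) (p : seq nat -> seq nat -> C) (G : seq nat -> C).
Hypothesis pG : associated p G.
Variable la : seq nat.

Lemma sum_completions (m : nat) (A : {ffun 'I_m -> box la}) (ka : seq nat) :
  (forall k, colsum A k <= lav la k)%N ->
  \sum_(B : {ffun 'I_(size ka) -> box la} |
          fam_rowsums B ka && [forall k, colsum (ffun_cat A B) k == lav la k])
     (vfact (lav la))%:R / fam_fact C (ffun_cat A B) * fam_weight G (ffun_cat A B) =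
  (vfact (lav la))%:R / ((vfact (vsub (lav la) (colsum A)))%:R * fam_fact C A)
    * fam_weight G A * p (sortpart (vseq (vsub (lav la) (colsum A)))) (sortpart ka).
Proof.
move=> A_le; set v := vsub (lav la) (colsum A).
have v_le : (vsum v <= sumn la)%N.
  by rewrite -vsum_lav; apply: leq_sum => k _; apply: leq_subr.
have [s [s_inj v_s v_out]] := support_embedding v.
rewrite (associated_at_vector pG ka v_le s_inj v_s v_out) mulr_sumr.
apply: eq_big => [B|B _].
  congr andb; apply: eq_forallb => k.
  by rewrite colsum_cat /v /vsub -{1}(subnK (A_le k)) addnC eqn_add2r.
have v_neq0 : (vfact v)%:R != 0 :> C by rewrite pnatr_eq0 -lt0n vfact_gt0.
have := fam_fact_neq0 C A; have := fam_fact_neq0 C B.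
rewrite fam_fact_cat fam_weight_cat => B_neq0 A_neq0.
by field; rewrite v_neq0 A_neq0 B_neq0.
Qed.

Lemma associated_cat (mu ka : seq nat) : is_part la ->
  p la (sortpart (mu ++ ka)) =
  \sum_(A : {ffun 'I_(size mu) -> box la} |
          fam_rowsums A mu && [forall k, colsum A k <= lav la k]%N)
    (vfact (lav la))%:R / ((vfact (vsub (lav la) (colsum A)))%:R * fam_fact C A)
    * fam_weight G A * p (sortpart (vseq (vsub (lav la) (colsum A)))) (sortpart ka).
Proof.
move=> la_part; rewrite (associatedE pG) // size_cat big_mkcond big_ffun_cat [RHS]big_mkcond.
apply: eq_bigr => A _; under eq_bigr do rewrite fam_rowsums_cat.
have [A_rows|_] /= := boolP (fam_rowsums A mu); last by rewrite big1.
have [/forallP A_le|A_nle] := boolP [forall k, colsum A k <= lav la k]%N.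
  by rewrite -big_mkcond; apply: sum_completions.
rewrite big1 // => B _; case: ifP => // /andP[_ /forallP B_cols].
case/negP: A_nle; apply/forallP => k.
by rewrite -(eqP (B_cols k)) colsum_cat leq_addr.
Qed.

End AssociatedCat.

Theorem mainTheorem15 (C : numClosedFieldType)
  (p : seq nat -> seq nat -> C) (G : seq nat -> C) :
  quasi_genus G -> full_sequence p -> binomial_type p -> associated p G ->
  forall la mu : seq nat, is_part la -> is_part mu ->
  forall ka : seq nat, is_part ka ->
  Dmu mu (p la) ka =
  \sum_(A : {ffun 'I_(size mu) -> box la} |
          [forall i, vsum (bv (A i)) == nth 0%N mu i] &&
          [forall k, (\sum_(i < size mu) bv (A i) k <= lav la k)%N])
    (vfact (lav la))%:R /
      ((vfact (vsub (lav la) (fun k => \sum_(i < size mu) bv (A i) k)%N))%:R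
       * \prod_(i < size mu) (vfact (bv (A i)))%:R)
    * \prod_(i < size mu) G (sortpart (vseq (bv (A i))))
    * p (sortpart (vseq (vsub (lav la) (fun k => \sum_(i < size mu) bv (A i) k)%N))) ka.
Proof.
move=> _ _ _ pG la mu la_part mu_part ka ka_part.
rewrite -(sortpart_id ka_part) Dmu_sortpart; last by case/andP: mu_part.
exact: (associated_cat pG mu ka la_part).
Qed.
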